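(* With the notation of the context, suppose $A=1$. Then every $\alpha$-communal $k$-tuple can be written in exactly one way as a nonnegative integer linear combination $\sum_{i=1}^k c_i\mathbf{x}_i$ with $c_i\in\mathbb{Z}_{\ge 0}$; that is, $\mathbf{x}_1,\dots,\mathbf{x}_k$ freely generate the monoid of $\alpha$-communal $k$-tuples.
   Context: Let $k\ge 2$ and let $\alpha_1,\dots,\alpha_k$ be nonnegative rational numbers such that the sum of any $k-1$ of them is at most $1$ and $\sum_i\alpha_i>1$. A $k$-tuple $[g_1,\dots,g_k]$ of integers is called $\alpha$-communal if $0\le g_i\le \alpha_i\sum_{j=1}^k g_j$ for every $i$. Write $\alpha_i=m_i/n_i$ in lowest terms with $n_i\ge 1$. Set $N=\prod_{i=1}^k n_i$, $A=N(\sum_{i=1}^k\alpha_i-1)$, and $\hat\alpha_i=1-\sum_{j\ne i}\alpha_j$. For each $i$ define $\mathbf{x}_i=\frac{N}{n_i}[\alpha_1,\dots,\alpha_{i-1},\hat\alpha_i,\alpha_{i+1},\dots,\alpha_k]$, i.e. the $k$-tuple whose $j$-th entry is $\frac{N}{n_i}\alpha_j$ for $j\ne i$ and whose $i$-th entry is $\frac{N}{n_i}\hat\alpha_i$. *)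

From HB Require Import structures.
From mathcomp Require Import all_boot all_order all_algebra.
Set Implicit Arguments. Unset Strict Implicit. Unset Printing Implicit Defensive.
Import Order.TTheory GRing.Theory Num.Theory.
Local Open Scope ring_scope.

Definition communal (k : nat) (alpha : 'I_k -> rat) (g : 'I_k -> int) : Prop :=
  forall i : 'I_k, 0 <= g i /\ (g i)%:~R <= alpha i * (\sum_(j < k) g j)%:~R.

Definition den_i (k : nat) (alpha : 'I_k -> rat) (i : 'I_k) : rat :=
  (denq (alpha i))%:~R.

Definition bigN (k : nat) (alpha : 'I_k -> rat) : rat :=
  \prod_(i < k) den_i alpha i.

Definition bigA (k : nat) (alpha : 'I_k -> rat) : rat :=
  bigN alpha * (\sum_(i < k) alpha i - 1).

Definition alpha_hat (k : nat) (alpha : 'I_k -> rat) (i : 'I_k) : rat :=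
  1 - \sum_(j < k | j != i) alpha j.

Definition xvec (k : nat) (alpha : 'I_k -> rat) (i j : 'I_k) : rat :=
  bigN alpha / den_i alpha i * (if j == i then alpha_hat alpha i else alpha j).

From HB Require Import structures.
From mathcomp Require Import all_boot all_order all_algebra.
From mathcomp Require Import ring lra.
Import Order.TTheory GRing.Theory Num.Theory.
Set Implicit Arguments. Unset Strict Implicit. Unset Printing Implicit Defensive.
Local Open Scope ring_scope.

(* Write q_i = N / n_i = prod_{j <> i} n_j, a positive integer,
   and S = sum_i alpha_i.  Each x_i has integer entries summing to q_i, and
   the hypothesis A = N (S - 1) = 1 gives x_i = q_i * alpha - e_i / n_i.
   Hence for any rational coefficients c,
      (sum_i c_i x_i)_j = alpha_j * (sum_i c_i q_i) - c_j / n_j.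
   For a communal g with total s, the candidate coefficients are the
   "slacks" c_j = n_j (alpha_j s - g_j): they are natural numbers by
   communality and integrality of n_j alpha_j, and sum_i c_i q_i =
   N (S - 1) s = s, so the combination gives back g.  Conversely any
   combination equal to g has sum_i c_i q_i = s (sum the entries), and the
   formula above then forces c_j = n_j (alpha_j s - g_j): uniqueness.
   Finally x_i is itself communal: its entries are nonnegative (by the
   sub-sum hypothesis) and x_ij <= q_i alpha_j = alpha_j * (sum_l x_il). *)

Section CommunalMonoid.

Variables (k : nat) (alpha : 'I_k -> rat).

Lemma den_gt0 i : 0 < den_i alpha i.
Proof. by rewrite /den_i ltr0z denq_gt0. Qed.

Lemma den_neq0 i : den_i alpha i != 0.
Proof. by rewrite gt_eqF // den_gt0. Qed.

Lemma den_int i : den_i alpha i \is a Num.int.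
Proof. exact: intr_int. Qed.

Lemma alpha_den_int i : alpha i * den_i alpha i \is a Num.int.
Proof. by rewrite /den_i -numqE intr_int. Qed.

Definition cofactor (i : 'I_k) : rat := bigN alpha / den_i alpha i.

Lemma xvec_cofactor i j :
  xvec alpha i j = cofactor i * (if j == i then alpha_hat alpha i else alpha j).
Proof. by []. Qed.

Lemma cofactorE i : cofactor i = \prod_(j < k | j != i) den_i alpha j.
Proof. by rewrite /cofactor /bigN (bigD1 i) //= mulrAC divff ?mul1r // den_neq0. Qed.

Lemma cofactor_ge0 i : 0 <= cofactor i.
Proof. by rewrite cofactorE; apply: prodr_ge0 => j _; exact: ltW (den_gt0 j). Qed.

Lemma cofactor_int i : cofactor i \is a Num.int.
Proof. by rewrite cofactorE; apply: rpred_prod => j _; exact: den_int. Qed.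

(* For l <> i, q_i alpha_l contains the factor n_l alpha_l, so is integral. *)
Lemma cofactor_alpha_int i l : l != i -> cofactor i * alpha l \is a Num.int.
Proof.
move=> neq_li; rewrite cofactorE (bigD1 l) //= mulrAC.
apply: rpredM; first by rewrite mulrC alpha_den_int.
by apply: rpred_prod => m _; exact: den_int.
Qed.

Lemma xvec_int i j : xvec alpha i j \is a Num.int.
Proof.
rewrite xvec_cofactor; case: eqP => [_|/eqP neq_ji]; last exact: cofactor_alpha_int.
rewrite /alpha_hat mulrBr mulr1 mulr_sumr; apply: rpredB; first exact: cofactor_int.
by apply: rpred_sum => l neq_li; exact: cofactor_alpha_int.
Qed.

(* The entries of x_i sum to q_i, since hat(alpha)_i + sum_{j<>i} alpha_j = 1. *)
Lemma xvec_sum i : \sum_(l < k) xvec alpha i l = cofactor i.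
Proof.
rewrite -mulr_sumr (bigD1 i) //= eqxx.
rewrite (eq_bigr alpha) => [|l /negbTE -> //].
by rewrite /alpha_hat subrK mulr1.
Qed.

(* The slack of g at j: n_j (alpha_j * sum g - g_j), the coefficient of x_j
   in the decomposition of g. *)
Definition slack (g : 'I_k -> int) (j : 'I_k) : rat :=
  den_i alpha j * (alpha j * (\sum_(l < k) g l)%:~R - (g j)%:~R).

Lemma slack_nat g j : communal alpha g -> slack g j \is a Num.nat.
Proof.
move=> /(_ j) [_ le_g]; rewrite natrEint; apply/andP; split.
  rewrite /slack mulrBr mulrCA mulrA; apply: rpredB.
    by apply: rpredM; [exact: alpha_den_int | exact: intr_int].
  by apply: rpredM; [exact: den_int | exact: intr_int].
by apply: mulr_ge0; [exact: ltW (den_gt0 j) | rewrite subr_ge0].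
Qed.

Hypothesis hA : bigA alpha = 1.

Lemma xvecE i j :
  xvec alpha i j = cofactor i * alpha j - (j == i)%:R / den_i alpha i.
Proof.
rewrite xvec_cofactor; case: eqP => [->|_]; last by rewrite mul0r subr0.
move: hA; rewrite /bigA (bigD1 i) //= /alpha_hat => hA'.
have -> : 1 / den_i alpha i = cofactor i *
    (alpha i + \sum_(l < k | l != i) alpha l - 1) by rewrite /cofactor mulrAC hA'.
ring.
Qed.

Lemma combination_entry (c : 'I_k -> rat) j :
  \sum_(i < k) c i * xvec alpha i j =
  alpha j * \sum_(i < k) c i * cofactor i - c j / den_i alpha j.
Proof.
under eq_bigr => i _ do rewrite xvecE mulrBr.
rewrite sumrB mulr_sumr; congr (_ - _); first by apply: eq_bigr => i _; ring.
rewrite (bigD1 j) //= eqxx big1 ?addr0; first by rewrite mul1r.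
by move=> l; rewrite eq_sym => /negbTE ->; rewrite mul0r mulr0.
Qed.

(* Weighting cofactors by slacks recovers the total: sum_i slack_i q_i
   = N (sum_i alpha_i - 1) * sum g = sum g. *)
Lemma slack_cofactor_sum g :
  \sum_(i < k) slack g i * cofactor i = (\sum_(l < k) g l)%:~R.
Proof.
set s : rat := (\sum_(l < k) g l)%:~R.
transitivity (bigN alpha * \sum_(i < k) (alpha i * s - (g i)%:~R)).
  rewrite mulr_sumr; apply: eq_bigr => i _; rewrite /slack /cofactor.
  by field; rewrite den_neq0.
have -> : \sum_(i < k) (alpha i * s - (g i)%:~R) = (\sum_(i < k) alpha i - 1) * s.
  by rewrite sumrB -mulr_suml /s rmorph_sum /=; ring.
by rewrite mulrA -/(bigA alpha) hA mul1r.
Qed.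

Lemma slack_combination g j :
  \sum_(i < k) slack g i * xvec alpha i j = (g j)%:~R.
Proof.
rewrite combination_entry slack_cofactor_sum /slack.
by field; rewrite den_neq0.
Qed.

Lemma combination_slack (g : 'I_k -> int) (c : 'I_k -> rat) :
  (forall j, (g j)%:~R = \sum_(i < k) c i * xvec alpha i j) ->
  forall j, c j = slack g j.
Proof.
move=> decomp j.
have total : (\sum_(l < k) g l)%:~R = \sum_(i < k) c i * cofactor i.
  rewrite rmorph_sum /=; under eq_bigr => l _ do rewrite decomp.
  by rewrite exchange_big /=; apply: eq_bigr => i _; rewrite -mulr_sumr xvec_sum.
rewrite /slack total decomp combination_entry.
by field; rewrite den_neq0.
Qed.

End CommunalMonoid.

Theorem mainTheorem6 (k : nat) (alpha : 'I_k -> rat)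
  (hk : (2 <= k)%N)
  (hnn : forall i, 0 <= alpha i)
  (hsub : forall i0 : 'I_k, \sum_(j < k | j != i0) alpha j <= 1)
  (hsum : 1 < \sum_(i < k) alpha i)
  (hA : bigA alpha = 1) :
  (* each x_i is an alpha-communal integer k-tuple *)
  (forall i : 'I_k, exists y : 'I_k -> int,
      communal alpha y /\ forall j, (y j)%:~R = xvec alpha i j) /\
  (* every alpha-communal k-tuple is a unique N-combination of the x_i *)
  (forall g : 'I_k -> int, communal alpha g ->
     (exists c : 'I_k -> nat,
        forall j, (g j)%:~R = \sum_(i < k) (c i)%:R * xvec alpha i j) /\
     (forall c c' : 'I_k -> nat,
        (forall j, (g j)%:~R = \sum_(i < k) (c i)%:R * xvec alpha i j) ->
        (forall j, (g j)%:~R = \sum_(i < k) (c' i)%:R * xvec alpha i j) ->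
        forall i, c i = c' i)).
Proof.
split=> [i | g g_comm].
  pose y j := Num.floor (xvec alpha i j).
  have yE j : (y j)%:~R = xvec alpha i j by apply/eqP; rewrite -intrEfloor xvec_int.
  exists y; split=> // j; rewrite yE; split.
    rewrite -(ler0z rat) yE xvec_cofactor; apply: mulr_ge0; first exact: cofactor_ge0.
    by case: eqP => _ //; rewrite /alpha_hat subr_ge0.
  rewrite rmorph_sum /=; under eq_bigr => l _ do rewrite yE.
  rewrite xvec_sum xvecE // mulrC lerBlDr lerDl.
  by apply: divr_ge0; [exact: ler0n | exact: ltW (den_gt0 alpha i)].
split=> [|c c' decomp decomp' i].
  pose c j := Num.truncn (slack alpha g j).
  have cE j : (c j)%:R = slack alpha g j.
    by apply/eqP; rewrite -natrEtruncn slack_nat.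
  by exists c => j; under eq_bigr => i _ do rewrite cE; rewrite slack_combination.
apply/eqP; rewrite -(eqr_nat rat).
by rewrite (combination_slack hA decomp) (combination_slack hA decomp').
Qed.
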